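(* Let $a>0$. The polynomial equation $27x^3(a-x)-(3a-x)^3=0$ in the real unknown $x$ has a positive real root if and only if $a\le a_0$ or $a\ge a_c$, where $a_0=\frac{2}{27}\,(26+15\sqrt3)^{-1}$ and $a_c=\frac{2(26+15\sqrt3)}{27}$. *)

From Stdlib Require Import Reals.
Open Scope R_scope.

Definition a_0 : R := (2 / 27) * / (26 + 15 * sqrt 3).
Definition a_c : R := 2 * (26 + 15 * sqrt 3) / 27.

(** Writing x = a t turns the equation into h a t = 0 with
    h a t = 27 a t^3 (1 - t) - (3 - t)^3, which is affine in a with slope
    27 t^3 (1 - t).  For s = ±√3 and a_s = (52 + 30 s)/27 one has
    h a_s t = -(t - (6 - 3 s))^2 q_s(t) with q_s > 0, so h a_s <= 0 with a double
    zero at 6 - 3 s.  Hence for 0 < t < 1 a root forces a >= a_c = a_√3, for t > 1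
    it forces a <= a_0 = a_(-√3), and t = 1 is never a root; conversely in these
    ranges h a changes sign on [0, 6 - 3√3], resp. [1, 6 + 3√3]. *)

From Stdlib Require Import Reals Lra Psatz.
Open Scope R_scope.

Definition h (a t : R) : R := 27 * a * t ^ 3 * (1 - t) - (3 - t) ^ 3.

Lemma positive_root_iff (a : R) : 0 < a ->
  (exists x : R, 0 < x /\ 27 * x ^ 3 * (a - x) - (3 * a - x) ^ 3 = 0)
  <-> (exists t : R, 0 < t /\ h a t = 0).
Proof.
  intros ha.
  assert (Hscale : forall t,
    27 * (a * t) ^ 3 * (a - a * t) - (3 * a - a * t) ^ 3 = a ^ 3 * h a t)
    by (intro t; unfold h; ring).
  assert (Ha3 : 0 < a ^ 3) by (apply pow_lt; lra).
  split.
  - intros [x [hx hroot]]. exists (x / a). split.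
    + apply Rdiv_lt_0_compat; lra.
    + replace x with (a * (x / a)) in hroot by (field; lra).
      rewrite Hscale in hroot. nra.
  - intros [t [ht hroot]]. exists (a * t). split.
    + nra.
    + rewrite Hscale, hroot. ring.
Qed.

Lemma h_shift (a b t : R) : h a t = h b t + 27 * (a - b) * (t ^ 3 * (1 - t)).
Proof. unfold h. ring. Qed.

Lemma h_at_0 (a : R) : h a 0 = -27.
Proof. unfold h. ring. Qed.

Lemma h_at_1 (a : R) : h a 1 = -8.
Proof. unfold h. ring. Qed.

Lemma continuity_h (a : R) : continuity (h a).
Proof. unfold h. reg. Qed.

Lemma h_root_between (a lo hi : R) : lo <= hi -> h a lo < 0 -> 0 <= h a hi ->
  exists t, lo < t <= hi /\ h a t = 0.
Proof.
  intros hle hlo hhi.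
  destruct (IVT_cor (h a) lo hi (continuity_h a) hle) as [t [[t_lo t_hi] ht]].
  - nra.
  - exists t. repeat split; try assumption.
    destruct t_lo as [t_lo | <-]; [assumption | lra].
Qed.

(* s is either square root of 3: a_c and a_0 are the two conjugate values of crit_param. *)
Section DoubleRoot.

Variable s : R.
Hypothesis s_sq : s ^ 2 = 3.

Definition crit_param : R := (52 + 30 * s) / 27.
Definition crit_point : R := 6 - 3 * s.
Definition crit_cofactor (t : R) : R :=
  (52 + 30 * s) * t ^ 2 + (31 + 18 * s) * t + (21 + 12 * s).

Lemma h_crit_param_factor (t : R) :
  h crit_param t = - (t - crit_point) ^ 2 * crit_cofactor t.
Proof.
  assert (s_cube : s ^ 3 = 3 * s) by (rewrite <- s_sq; ring).
  unfold h, crit_param, crit_point, crit_cofactor.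
  field_simplify. rewrite s_cube, s_sq. ring.
Qed.

(* The discriminant of the cofactor is -(6755 + 3900 s), negative because
   6755^2 - 3 * 3900^2 = 25. *)
Lemma crit_cofactor_pos (t : R) : 0 < crit_cofactor t.
Proof.
  unfold crit_cofactor.
  assert (Hlead : 0 < 52 + 30 * s) by nra.
  assert (Hdisc : 0 < 6755 + 3900 * s) by nra.
  assert (Hsq : 4 * (52 + 30 * s) * ((52 + 30 * s) * t ^ 2 + (31 + 18 * s) * t + (21 + 12 * s))
              = (2 * (52 + 30 * s) * t + (31 + 18 * s)) ^ 2 + (6755 + 3900 * s))
    by (ring_simplify; rewrite s_sq; ring).
  pose proof (pow2_ge_0 (2 * (52 + 30 * s) * t + (31 + 18 * s))).
  nra.
Qed.

Lemma h_crit_param_nonpos (t : R) : h crit_param t <= 0.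
Proof.
  rewrite h_crit_param_factor.
  pose proof (pow2_ge_0 (t - crit_point)). pose proof (crit_cofactor_pos t). nra.
Qed.

Lemma h_crit_param_crit_point : h crit_param crit_point = 0.
Proof. rewrite h_crit_param_factor. ring. Qed.

Lemma h_neg_of_crit (a t : R) : 0 < t -> (a - crit_param) * (1 - t) < 0 -> h a t < 0.
Proof.
  intros ht hsign.
  rewrite (h_shift a crit_param).
  pose proof (h_crit_param_nonpos t). pose proof (pow_lt t 3 ht). nra.
Qed.

Lemma h_crit_point_nonneg (a : R) : 0 <= (a - crit_param) * (1 - crit_point) ->
  0 <= h a crit_point.
Proof.
  intros hsign.
  assert (0 < crit_point) by (unfold crit_point; nra).
  rewrite (h_shift a crit_param), h_crit_param_crit_point.
  pose proof (pow_lt crit_point 3 ltac:(assumption)). nra.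
Qed.

End DoubleRoot.

Lemma sqrt3_sq : sqrt 3 ^ 2 = 3.
Proof. simpl. rewrite Rmult_1_r. apply sqrt_sqrt. lra. Qed.

Lemma opp_sqrt3_sq : (- sqrt 3) ^ 2 = 3.
Proof. replace ((- sqrt 3) ^ 2) with (sqrt 3 ^ 2) by ring. exact sqrt3_sq. Qed.

Lemma sqrt3_bounds : 5 / 3 < sqrt 3 < 2.
Proof. pose proof sqrt3_sq. pose proof (sqrt_pos 3). nra. Qed.

Lemma a_c_crit_param : a_c = crit_param (sqrt 3).
Proof. unfold a_c, crit_param. field. Qed.

Lemma a_0_crit_param : a_0 = crit_param (- sqrt 3).
Proof.
  pose proof sqrt3_bounds.
  unfold a_0, crit_param. field_simplify_eq; [rewrite sqrt3_sq; ring | lra].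
Qed.

Theorem mainTheorem5 (a : R) (ha : 0 < a) :
  (exists x : R, 0 < x /\ 27 * x ^ 3 * (a - x) - (3 * a - x) ^ 3 = 0)
  <-> (a <= a_0 \/ a >= a_c).
Proof.
  pose proof sqrt3_bounds.
  rewrite (positive_root_iff a ha), a_c_crit_param, a_0_crit_param.
  split.
  - intros [t [ht hroot]].
    destruct (Rtotal_order t 1) as [t_lt | [t_eq | t_gt]].
    + right. apply Rnot_lt_ge. intro a_lt.
      enough (h a t < 0) by lra.
      apply (h_neg_of_crit (sqrt 3) sqrt3_sq); [lra | nra].
    + subst t. rewrite h_at_1 in hroot. lra.
    + left. apply Rnot_lt_le. intro a_gt.
      enough (h a t < 0) by lra.
      apply (h_neg_of_crit (- sqrt 3) opp_sqrt3_sq); [lra | nra].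
  - intros [a_le | a_ge].
    + destruct (h_root_between a 1 (crit_point (- sqrt 3))) as [t [[t_lo _] hroot]].
      * unfold crit_point. lra.
      * rewrite h_at_1. lra.
      * apply (h_crit_point_nonneg _ opp_sqrt3_sq). unfold crit_point. nra.
      * exists t. split; [lra | exact hroot].
    + destruct (h_root_between a 0 (crit_point (sqrt 3))) as [t [[t_lo _] hroot]].
      * unfold crit_point. lra.
      * rewrite h_at_0. lra.
      * apply (h_crit_point_nonneg _ sqrt3_sq). unfold crit_point. nra.
      * exists t. split; [lra | exact hroot].
Qed.
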